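(* In the calculus described in the context, for every well-typed expression $e:A\leadsto B$ (in which every user-defined operation carries a consistent incrementalization, and every occurrence of $+$ is at a type $A$ with $[\![A]\!]=[\![A]\!]'$ and with $\oplus$ associative and commutative on $[\![A]\!]$), the triple $(C_e,i_e,d_e)$ produced by the incrementalization transformation is a consistent incrementalization of the denotation $[\![e]\!]:[\![A]\!]\to[\![B]\!]$, i.e. for all $x\in[\![A]\!]$, $x'\in[\![A]\!]'$: $(i_e\,x)_1=[\![e]\!]\,x$; $[\![e]\!](x\oplus x')=[\![e]\!]\,x\oplus(d_e\,x'\,(i_e\,x)_2)_1$; and $(i_e(x\oplus x'))_2=(d_e\,x'\,(i_e\,x)_2)_2$.
   Context: Fix a container: a type $S$ of shapes and for each $s:S$ an index type $\mathrm{Pos}(s)$ with decidable equality. Fix a base change structure $(\beta,\beta',\oplus,\ominus)$ with $x\oplus(y\ominus x)=y$. Object types: $A,B::=\mathsf{b}\mid F_sA\mid A\times B\mid A+B$. Value types/change types and $\oplus,\ominus$: $[\![\mathsf b]\!]=\beta$, $[\![\mathsf b]\!]'=\beta'$; $[\![F_sA]\!]=\mathrm{Pos}(s)\to[\![A]\!]$, $[\![F_sA]\!]'=\mathrm{Pos}(s)\to[\![A]\!]'$ (pointwise $\oplus,\ominus$); products componentwise; $[\![A+B]\!]=[\![A]\!]+[\![B]\!]$ (injections $\iota_1,\iota_2$) and $[\![A+B]\!]'$ has constructors $\mathsf{cl}\,a',\mathsf{cr}\,b',\mathsf{sl}\,a,\mathsf{sr}\,b,\mathsf{null}$ ($a'\in[\![A]\!]',b'\in[\![B]\!]',a\in[\![A]\!],b\in[\![B]\!]$)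 with $\iota_1x\oplus\mathsf{cl}x'=\iota_1(x\oplus x')$, $\iota_1x\oplus\mathsf{cr}y'=\iota_1x$, $\iota_2y\oplus\mathsf{cl}x'=\iota_2y$, $\iota_2y\oplus\mathsf{cr}y'=\iota_2(y\oplus y')$, $z\oplus\mathsf{sl}x=\iota_1x$, $z\oplus\mathsf{sr}y=\iota_2y$, $z\oplus\mathsf{null}=z$; $\iota_1x\ominus\iota_1y=\mathsf{cl}(x\ominus y)$, $\iota_1x\ominus\iota_2y=\mathsf{sl}x$, $\iota_2x\ominus\iota_1y=\mathsf{sr}x$, $\iota_2x\ominus\iota_2y=\mathsf{cr}(x\ominus y)$. An incrementalization of $f:[\![A]\!]\to[\![B]\!]$ is a triple $(C,i,d)$, $C$ a type, $i:[\![A]\!]\to[\![B]\!]\times C$, $d:[\![A]\!]'\to C\to[\![B]\!]'\times C$. A user-defined operation $o:\mathsf{Op}\,A\,B$ is a function $f_o:[\![A]\!]\to[\![B]\!]$ together with a consistent incrementalization of $f_o$ (consistency meaning the three laws in the claim). Expressions, typing and denotation ($s,s_1,s_2:S$; $i:\mathrm{Pos}(s)$; $r:\mathrm{Pos}(s_2)\to\mathrm{Pos}(s_1)$; $p:\mathrm{Pos}(s)\to\mathbb B$; $c\in[\![A]\!]$): $e_1;e_2:A\leadsto C$ for $e_1:A\leadsto B,e_2:B\leadsto C$, $[\![e_1;e_2]\!]x=[\![e_2]\!]([\![e_1]\!]x)$; $e_1\times e_2:A\times C\leadsto B\times D$, $(x,y)\mapsto([\![e_1]\!]x,[\![e_2]\!]y)$;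 $\mathsf{id}:A\leadsto A$; $\mathsf{dup}:A\leadsto A\times A$, $x\mapsto(x,x)$; $\mathsf{fst},\mathsf{snd}$ projections; $\mathsf{cst}\,c:B\leadsto A$, $x\mapsto c$; $+:A\times A\leadsto A$, $(x,y)\mapsto x\oplus y$ (only when $[\![A]\!]=[\![A]\!]'$); $\mathsf{op}\,o:A\leadsto B$, $[\![\mathsf{op}\,o]\!]=f_o$; $\mathsf{map}\,e:F_sA\leadsto F_sB$, $x\mapsto\lambda i.[\![e]\!](x\,i)$; $\mathsf{zip}:F_sA\times F_sB\leadsto F_s(A\times B)$, $(x,y)\mapsto\lambda i.(x\,i,y\,i)$; $\mathsf{get}\,i:F_sA\leadsto A$, $x\mapsto x\,i$; $\mathsf{set}\,i:A\times F_sA\leadsto F_sA$, $(x,a)\mapsto\lambda j.\,\mathsf{if}\ i=j\ \mathsf{then}\ x\ \mathsf{else}\ a\,j$; $\mathsf{reshape}\,r:F_{s_1}A\leadsto F_{s_2}A$, $x\mapsto\lambda i.x(r\,i)$; $\mathsf{replicate}\,s:A\leadsto F_sA$, $x\mapsto\lambda i.x$; $\mathsf{tp}:F_{s_1}(F_{s_2}A)\leadsto F_{s_2}(F_{s_1}A)$, $x\mapsto\lambda i\lambda j.\,x\,j\,i$; $\mathsf{filter}\,p:A\times F_sA\leadsto F_sA$, $(x,a)\mapsto\lambda i.\,\mathsf{if}\ p\,i\ \mathsf{then}\ a\,i\ \mathsf{else}\ x$; $\mathsf{inl}:A\leadsto A+B$, $\mathsf{inr}:B\leadsto A+B$; $\mathsf{fuse}:A+A\leadsto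 A$, $\iota_kx\mapsto x$; $\mathsf{distr}:A\times(B+C)\leadsto A\times B+A\times C$, $(x,\iota_ky)\mapsto\iota_k(x,y)$; $e_1\|e_2:A+C\leadsto B+D$, $\iota_1x\mapsto\iota_1([\![e_1]\!]x)$, $\iota_2x\mapsto\iota_2([\![e_2]\!]x)$ (the paper prints these last two without the injections). Incrementalization transformation $e\mapsto(C_e,i_e,d_e)$: • For $e\in\{\mathsf{id},\mathsf{dup},\mathsf{fst},\mathsf{snd},\mathsf{zip},\mathsf{tp},\mathsf{get}\,i,\mathsf{set}\,i,\mathsf{reshape}\,r,\mathsf{replicate}\,s,\mathsf{filter}\,p\}$: $C_e=\mathsf{Unit}$, $i_e\,x=([\![e]\!]x,\star)$, $d_e\,x'\,\star=(e\text{'s defining equation evaluated on the change }x',\star)$ (e.g. $d_{\mathsf{dup}}x'\star=((x',x'),\star)$). For $\mathsf{inl}$/$\mathsf{inr}$: $C=\mathsf{Unit}$, $i\,x=(\iota_kx,\star)$, $d_{\mathsf{inl}}x'\star=(\mathsf{cl}\,x',\star)$, $d_{\mathsf{inr}}y'\star=(\mathsf{cr}\,y',\star)$. • $\mathsf{cst}\,c$: $C=\mathsf{Unit}$, $i\,x=(c,\star)$, $d\,x'\,\star=(c\ominus c,\star)$. • $+$: $C=\mathsf{Unit}$, $i(x,y)=(x\oplus y,\star)$, $d(x',y')\star=(x'\oplus y',\star)$. • $\mathsf{op}\,o$: the given incrementalization of $o$. • $f;g$: $C=C_f\times C_g$, $i\,x=(z,(c_1,c_2))$ where $(y,c_1)=i_f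 x$, $(z,c_2)=i_g y$; $d\,x'(c_1,c_2)=(z',(c_1',c_2'))$ where $(y',c_1')=d_fx'c_1$, $(z',c_2')=d_gy'c_2$. • $f\times g$: $C=C_f\times C_g$, $i(x_1,x_2)=((y_1,y_2),(c_1,c_2))$ with $(y_1,c_1)=i_fx_1$, $(y_2,c_2)=i_gx_2$; $d(x_1',x_2')(c_1,c_2)=((y_1',y_2'),(c_1',c_2'))$ with $(y_k',c_k')$ from $d_f x_1'c_1$, $d_g x_2'c_2$. • $\mathsf{map}_s f$: $C=\mathrm{Pos}(s)\to C_f$, $i\,x=(\lambda j.(i_f(x\,j))_1,\lambda j.(i_f(x\,j))_2)$, $d\,x'\,c=(\lambda j.(d_f(x'j)(c\,j))_1,\lambda j.(d_f(x'j)(c\,j))_2)$. • $\mathsf{fuse}$: $C=[\![A]\!]+[\![A]\!]$, $i(\iota_kx)=(x,\iota_kx)$; $d(\mathsf{cl}x')(\iota_1x)=(x',\iota_1(x\oplus x'))$, $d(\mathsf{cr}y')(\iota_1x)=(x\ominus x,\iota_1x)$, $d(\mathsf{cl}x')(\iota_2y)=(y\ominus y,\iota_2y)$, $d(\mathsf{cr}y')(\iota_2y)=(y',\iota_2(y\oplus y'))$, $d(\mathsf{sl}x)(\iota_kx_0)=(x\ominus x_0,\iota_1x)$, $d(\mathsf{sr}y)(\iota_ky_0)=(y\ominus y_0,\iota_2y)$, $d\,\mathsf{null}(\iota_kx)=(x\ominus x,\iota_kx)$. • $\mathsf{distr}$: $C=[\![A]\!]\times([\![B]\!]+[\![C]\!])$,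 $i(x,\iota_ky)=(\iota_k(x,y),(x,\iota_ky))$; $d(x',\mathsf{cl}y')(x,\iota_1y)=(\mathsf{cl}(x',y'),(x\oplus x',\iota_1(y\oplus y')))$; $d(x',\mathsf{cr}y')(x,\iota_1y)=(\mathsf{cl}(x',y\ominus y),(x\oplus x',\iota_1y))$; $d(x',\mathsf{cl}y')(x,\iota_2y)=(\mathsf{cr}(x',y\ominus y),(x\oplus x',\iota_2y))$; $d(x',\mathsf{cr}y')(x,\iota_2y)=(\mathsf{cr}(x',y'),(x\oplus x',\iota_2(y\oplus y')))$; $d(x',\mathsf{sl}y)(x,\_)=(\mathsf{sl}(x\oplus x',y),(x\oplus x',\iota_1y))$; $d(x',\mathsf{sr}y)(x,\_)=(\mathsf{sr}(x\oplus x',y),(x\oplus x',\iota_2y))$; $d(x',\mathsf{null})(x,\iota_1y)=(\mathsf{cl}(x',y\ominus y),(x\oplus x',\iota_1y))$; $d(x',\mathsf{null})(x,\iota_2y)=(\mathsf{cr}(x',y\ominus y),(x\oplus x',\iota_2y))$. • $f\|g$ ($f:A_1\leadsto B_1$, $g:A_2\leadsto B_2$): $C=C_f\times[\![B_1]\!]+C_g\times[\![B_2]\!]$; $i(\iota_1x)=(\iota_1y,\iota_1(c,y))$ with $(y,c)=i_fx$, similarly for $\iota_2$ with $g$; $d(\mathsf{cl}x')(\iota_1(c,y))=(\mathsf{cl}y',\iota_1(c',y\oplus y'))$ with $(y',c')=d_fx'c$; $d(\mathsf{cr}x')(\iota_1(c,y))=(\mathsf{null},\iota_1(c,y))$; $d(\mathsf{cl}x')(\iota_2(c,y))=(\mathsf{null},\iota_2(c,y))$;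 $d(\mathsf{cr}x')(\iota_2(c,y))=(\mathsf{cr}y',\iota_2(c',y\oplus y'))$ with $(y',c')=d_gx'c$; $d(\mathsf{sl}x)(\iota_1(c_0,y_0))=(\mathsf{cl}(y\ominus y_0),\iota_1(c,y))$ and $d(\mathsf{sl}x)(\iota_2\_)=(\mathsf{sl}y,\iota_1(c,y))$ with $(y,c)=i_fx$; $d(\mathsf{sr}x)(\iota_1\_)=(\mathsf{sr}y,\iota_2(c,y))$ and $d(\mathsf{sr}x)(\iota_2(c_0,y_0))=(\mathsf{cr}(y\ominus y_0),\iota_2(c,y))$ with $(y,c)=i_gx$; $d\,\mathsf{null}\,z=(\mathsf{null},z)$. *)

Record container := Container {
  shape : Type;
  pos : shape -> Type;
  pos_dec : forall (s : shape) (i j : pos s), {i = j} + {i <> j}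
}.

Record bcs := Bcs {
  base : Type;
  dbase : Type;
  boplus : base -> dbase -> base;
  bominus : base -> base -> dbase;
  boplus_ominus : forall x y : base, boplus x (bominus y x) = y
}.

Inductive schg (X X' Y Y' : Type) : Type :=
| cl : X' -> schg X X' Y Y'
| cr : Y' -> schg X X' Y Y'
| sl : X -> schg X X' Y Y'
| sr : Y -> schg X X' Y Y'
| snull : schg X X' Y Y'.
Arguments cl {X X' Y Y'} _.
Arguments cr {X X' Y Y'} _.
Arguments sl {X X' Y Y'} _.
Arguments sr {X X' Y Y'} _.
Arguments snull {X X' Y Y'}.

Section Calculus.
Variable K : container.
Variable BS : bcs.

Inductive ty : Type :=
| tb : ty
| tF : shape K -> ty -> ty
| tprod : ty -> ty -> ty
| tsum : ty -> ty -> ty.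

Fixpoint val (A : ty) : Type :=
  match A with
  | tb => base BS
  | tF s A => pos K s -> val A
  | tprod A B => (val A * val B)%type
  | tsum A B => (val A + val B)%type
  end.

Fixpoint chg (A : ty) : Type :=
  match A with
  | tb => dbase BS
  | tF s A => pos K s -> chg A
  | tprod A B => (chg A * chg B)%type
  | tsum A B => schg (val A) (chg A) (val B) (chg B)
  end.

Fixpoint oplus (A : ty) : val A -> chg A -> val A :=
  match A return val A -> chg A -> val A with
  | tb => boplus BS
  | tF s A => fun x x' i => oplus A (x i) (x' i)
  | tprod A B => fun x x' => (oplus A (fst x) (fst x'), oplus B (snd x) (snd x'))
  | tsum A B => fun x x' =>
      match x, x' with
      | inl x, cl x' => inl (oplus A x x')
      | inl x, cr _ => inl x
      | inr y, cl _ => inr y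
      | inr y, cr y' => inr (oplus B y y')
      | _, sl a => inl a
      | _, sr b => inr b
      | z, snull => z
      end
  end.

Fixpoint ominus (A : ty) : val A -> val A -> chg A :=
  match A return val A -> val A -> chg A with
  | tb => bominus BS
  | tF s A => fun x y i => ominus A (x i) (y i)
  | tprod A B => fun x y => (ominus A (fst x) (fst y), ominus B (snd x) (snd y))
  | tsum A B => fun x y =>
      match x, y with
      | inl x, inl y => cl (ominus A x y)
      | inl x, inr _ => sl x
      | inr x, inl _ => sr x
      | inr x, inr y => cr (ominus B x y)
      end
  end.

Record incr (A B : ty) := Incr {
  iC : Type;
  ii : val A -> val B * iC;
  idd : chg A -> iC -> chg B * iC
}.
Arguments Incr {A B} iC ii idd.
Arguments iC {A B} _.
Arguments ii {A B} _ _.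
Arguments idd {A B} _ _ _.

Definition consistent (A B : ty) (f : val A -> val B) (I : incr A B) : Prop :=
  forall (x : val A) (x' : chg A),
    fst (ii I x) = f x /\
    f (oplus A x x') = oplus B (f x) (fst (idd I x' (snd (ii I x)))) /\
    snd (ii I (oplus A x x')) = snd (idd I x' (snd (ii I x))).

Record Op (A B : ty) := MkOp {
  op_f : val A -> val B;
  op_inc : incr A B;
  op_consistent : consistent A B op_f op_inc
}.
Arguments op_f {A B} _ _.
Arguments op_inc {A B} _.

Definition castVC (A : ty) (E : val A = chg A) (x : val A) : chg A :=
  match E in _ = T return T with eq_refl => x end.
Definition castCV (A : ty) (E : val A = chg A) (x : chg A) : val A :=
  match E in _ = T return T -> val A with eq_refl => fun y => y end x.
Arguments castVC {A} _ _.
Arguments castCV {A} _ _.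

Inductive expr : ty -> ty -> Type :=
| ecomp : forall A B C, expr A B -> expr B C -> expr A C
| epar : forall A B C D, expr A B -> expr C D -> expr (tprod A C) (tprod B D)
| eid : forall A, expr A A
| edup : forall A, expr A (tprod A A)
| efst : forall A B, expr (tprod A B) A
| esnd : forall A B, expr (tprod A B) B
| ecst : forall A B, val A -> expr B A
| eplus : forall A, val A = chg A -> expr (tprod A A) A
| eop : forall A B, Op A B -> expr A B
| emap : forall s A B, expr A B -> expr (tF s A) (tF s B)
| ezip : forall s A B, expr (tprod (tF s A) (tF s B)) (tF s (tprod A B))
| eget : forall s A, pos K s -> expr (tF s A) A
| eset : forall s A, pos K s -> expr (tprod A (tF s A)) (tF s A)
| ereshape : forall s1 s2 A, (pos K s2 -> pos K s1) -> expr (tF s1 A) (tF s2 A)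
| ereplicate : forall s A, expr A (tF s A)
| etp : forall s1 s2 A, expr (tF s1 (tF s2 A)) (tF s2 (tF s1 A))
| efilter : forall s A, (pos K s -> bool) -> expr (tprod A (tF s A)) (tF s A)
| einl : forall A B, expr A (tsum A B)
| einr : forall A B, expr B (tsum A B)
| efuse : forall A, expr (tsum A A) A
| edistr : forall A B C, expr (tprod A (tsum B C)) (tsum (tprod A B) (tprod A C))
| ebranch : forall A B C D, expr A B -> expr C D -> expr (tsum A C) (tsum B D).

Arguments ecomp {A B C} _ _.
Arguments epar {A B C D} _ _.
Arguments ecst {A} B _.
Arguments eplus {A} _.
Arguments eop {A B} _.
Arguments emap s {A B} _.
Arguments eget {s} A _.
Arguments eset {s} A _.
Arguments efilter {s} A _.
Arguments ebranch {A B C D} _ _.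

Fixpoint denote (A B : ty) (e : expr A B) : val A -> val B :=
  match e in expr A B return val A -> val B with
  | @ecomp _ _ _ f g => fun x => denote _ _ g (denote _ _ f x)
  | @epar _ _ _ _ f g => fun x => (denote _ _ f (fst x), denote _ _ g (snd x))
  | @eid _ => fun x => x
  | @edup _ => fun x => (x, x)
  | @efst _ _ => fun x => fst x
  | @esnd _ _ => fun x => snd x
  | @ecst _ _ c => fun _ => c
  | @eplus _ E => fun x => oplus _ (fst x) (castVC E (snd x))
  | @eop _ _ o => op_f o
  | @emap _ _ _ f => fun x i => denote _ _ f (x i)
  | @ezip _ _ _ => fun x i => (fst x i, snd x i)
  | @eget _ _ i => fun x => x i
  | @eset _ _ i => fun x j => if pos_dec K _ i j then fst x else snd x j
  | @ereshape _ _ _ r => fun x i => x (r i)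
  | @ereplicate _ _ => fun x _ => x
  | @etp _ _ _ => fun x i j => x j i
  | @efilter _ _ p => fun x i => if p i then snd x i else fst x
  | @einl _ _ => fun x => inl x
  | @einr _ _ => fun x => inr x
  | @efuse _ => fun x => match x with inl y => y | inr y => y end
  | @edistr _ _ _ => fun x =>
      match snd x with inl y => inl (fst x, y) | inr y => inr (fst x, y) end
  | @ebranch _ _ _ _ f g => fun x =>
      match x with inl y => inl (denote _ _ f y) | inr y => inr (denote _ _ g y) end
  end.
Arguments denote {A B} _ _.

Definition unit_incr (A B : ty) (f : val A -> val B) (f' : chg A -> chg B)
  : incr A B :=
  Incr unit (fun x => (f x, tt)) (fun x' (_ : unit) => (f' x', tt)).

Fixpoint trans (A B : ty) (e : expr A B) : incr A B :=
  match e in expr A B return incr A B with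
  | @ecomp A B C f g =>
      let If := trans _ _ f in let Ig := trans _ _ g in
      @Incr A C (iC If * iC Ig)
        (fun x => let (y, c1) := ii If x in
                  let (z, c2) := ii Ig y in (z, (c1, c2)))
        (fun x' c => let (y', c1') := idd If x' (fst c) in
                     let (z', c2') := idd Ig y' (snd c) in (z', (c1', c2')))
  | @epar A B C D f g =>
      let If := trans _ _ f in let Ig := trans _ _ g in
      @Incr (tprod A C) (tprod B D) (iC If * iC Ig)
        (fun x => let (y1, c1) := ii If (fst x) in
                  let (y2, c2) := ii Ig (snd x) in ((y1, y2), (c1, c2)))
        (fun x' c => let (y1', c1') := idd If (fst x') (fst c) in
                     let (y2', c2') := idd Ig (snd x') (snd c) in
                     ((y1', y2'), (c1', c2')))
  | @eid A => @unit_incr A A (fun x => x) (fun x' => x')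
  | @edup A => @unit_incr A (tprod A A) (fun x => (x, x)) (fun x' => (x', x'))
  | @efst A B => @unit_incr (tprod A B) A (fun x => fst x) (fun x' => fst x')
  | @esnd A B => @unit_incr (tprod A B) B (fun x => snd x) (fun x' => snd x')
  | @ecst A B c => @unit_incr B A (fun _ => c) (fun _ => ominus A c c)
  | @eplus A E => @unit_incr (tprod A A) A
      (fun x => oplus A (fst x) (castVC E (snd x)))
      (fun x' => castVC E (oplus A (castCV E (fst x')) (snd x')))
  | @eop _ _ o => op_inc o
  | @emap s A B f =>
      let If := trans _ _ f in
      @Incr (tF s A) (tF s B) (pos K s -> iC If)
        (fun x => (fun j => fst (ii If (x j)), fun j => snd (ii If (x j))))
        (fun x' c => (fun j => fst (idd If (x' j) (c j)),
                      fun j => snd (idd If (x' j) (c j))))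
  | @ezip s A B => @unit_incr (tprod (tF s A) (tF s B)) (tF s (tprod A B))
      (fun x i => (fst x i, snd x i)) (fun x' i => (fst x' i, snd x' i))
  | @eget s A i => @unit_incr (tF s A) A (fun x => x i) (fun x' => x' i)
  | @eset s A i => @unit_incr (tprod A (tF s A)) (tF s A)
      (fun x j => if pos_dec K _ i j then fst x else snd x j)
      (fun x' j => if pos_dec K _ i j then fst x' else snd x' j)
  | @ereshape s1 s2 A r => @unit_incr (tF s1 A) (tF s2 A)
      (fun x i => x (r i)) (fun x' i => x' (r i))
  | @ereplicate s A => @unit_incr A (tF s A) (fun x _ => x) (fun x' _ => x')
  | @etp s1 s2 A => @unit_incr (tF s1 (tF s2 A)) (tF s2 (tF s1 A))
      (fun x i j => x j i) (fun x' i j => x' j i)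
  | @efilter s A p => @unit_incr (tprod A (tF s A)) (tF s A)
      (fun x i => if p i then snd x i else fst x)
      (fun x' i => if p i then snd x' i else fst x')
  | @einl A B => @unit_incr A (tsum A B) (fun x => inl x) (fun x' => cl x')
  | @einr A B => @unit_incr B (tsum A B) (fun x => inr x) (fun x' => cr x')
  | @efuse A =>
      @Incr (tsum A A) A (val A + val A)
        (fun x => match x with inl y => (y, inl y) | inr y => (y, inr y) end)
        (fun x' c =>
           match x', c with
           | cl x', inl x => (x', inl (oplus A x x'))
           | cr _, inl x => (ominus A x x, inl x)
           | cl _, inr y => (ominus A y y, inr y)
           | cr y', inr y => (y', inr (oplus A y y'))
           | sl x, inl x0 => (ominus A x x0, inl x)
           | sl x, inr x0 => (ominus A x x0, inl x)
           | sr y, inl y0 => (ominus A y y0, inr y)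
           | sr y, inr y0 => (ominus A y y0, inr y)
           | snull, inl x => (ominus A x x, inl x)
           | snull, inr x => (ominus A x x, inr x)
           end)
  | @edistr A B C =>
      @Incr (tprod A (tsum B C)) (tsum (tprod A B) (tprod A C))
        (val A * (val B + val C))
        (fun x => match snd x with
                  | inl y => (inl (fst x, y), (fst x, inl y))
                  | inr y => (inr (fst x, y), (fst x, inr y))
                  end)
        (fun x' c =>
           let x := fst c in
           let xa := fst x' in
           match snd x', snd c with
           | cl y', inl y =>
               (cl (xa, y'), (oplus A x xa, inl (oplus B y y')))
           | cr _, inl y =>
               (cl (xa, ominus B y y), (oplus A x xa, inl y))
           | cl _, inr y =>
               (cr (xa, ominus C y y), (oplus A x xa, inr y))
           | cr y', inr y =>
               (cr (xa, y'), (oplus A x xa, inr (oplus C y y')))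
           | sl y, _ => (sl (oplus A x xa, y), (oplus A x xa, inl y))
           | sr y, _ => (sr (oplus A x xa, y), (oplus A x xa, inr y))
           | snull, inl y =>
               (cl (xa, ominus B y y), (oplus A x xa, inl y))
           | snull, inr y =>
               (cr (xa, ominus C y y), (oplus A x xa, inr y))
           end)
  | @ebranch A1 B1 A2 B2 f g =>
      let If := trans _ _ f in let Ig := trans _ _ g in
      @Incr (tsum A1 A2) (tsum B1 B2)
        ((iC If * val B1) + (iC Ig * val B2))
        (fun x => match x with
                  | inl x => let (y, c) := ii If x in (inl y, inl (c, y))
                  | inr x => let (y, c) := ii Ig x in (inr y, inr (c, y))
                  end)
        (fun x' z =>
           match x', z with
           | cl x', inl (c, y) =>
               let (y', c') := idd If x' c in (cl y', inl (c', oplus B1 y y'))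
           | cr _, inl (c, y) => (snull, inl (c, y))
           | cl _, inr (c, y) => (snull, inr (c, y))
           | cr x', inr (c, y) =>
               let (y', c') := idd Ig x' c in (cr y', inr (c', oplus B2 y y'))
           | sl x, inl (_, y0) =>
               let (y, c) := ii If x in (cl (ominus B1 y y0), inl (c, y))
           | sl x, inr _ =>
               let (y, c) := ii If x in (sl y, inl (c, y))
           | sr x, inl _ =>
               let (y, c) := ii Ig x in (sr y, inr (c, y))
           | sr x, inr (_, y0) =>
               let (y, c) := ii Ig x in (cr (ominus B2 y y0), inr (c, y))
           | snull, z => (snull, z)
           end)
  end.
Arguments trans {A B} _.

Definition plus_assoc_comm (A : ty) (E : val A = chg A) : Prop :=
  (forall u v w : val A,
     oplus A (oplus A u (castVC E v)) (castVC E w)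
     = oplus A u (castVC E (oplus A v (castVC E w)))) /\
  (forall u v : val A, oplus A u (castVC E v) = oplus A v (castVC E u)).

Fixpoint plus_ok (A B : ty) (e : expr A B) : Prop :=
  match e with
  | @ecomp _ _ _ f g => plus_ok _ _ f /\ plus_ok _ _ g
  | @epar _ _ _ _ f g => plus_ok _ _ f /\ plus_ok _ _ g
  | @emap _ _ _ f => plus_ok _ _ f
  | @ebranch _ _ _ _ f g => plus_ok _ _ f /\ plus_ok _ _ g
  | @eplus _ E => plus_assoc_comm _ E
  | _ => True
  end.

Arguments plus_ok {A B} _.

End Calculus.

Arguments plus_ok {K BS A B} _.
Arguments denote {K BS A B} _ _.
Arguments trans {K BS A B} _.
Arguments consistent {K BS A B} _ _.

(** The transformation is compositional, and
    consistency is preserved by each way of combining incrementalizations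
    (sequencing, pairing, mapping over positions, case analysis), so compound
    expressions inherit it from their parts.  A primitive with a trivial cache
    is consistent as soon as its change map [f'] satisfies
    [f (x oplus x') = f x oplus f' x']; for the structural primitives this holds
    by computation, since [oplus] acts componentwise and pointwise.  For [+] it
    is the interchange law [(x1 + a) + (x2 + b) = (x1 + x2) + (a + b)], a
    consequence of associativity and commutativity.  Whenever a change switches
    the side of a sum, the cache is recomputed and the output change is
    [y ominus y0], which is correct by [y0 oplus (y ominus y0) = y]. *)

From Stdlib Require Import FunctionalExtensionality Setoid ssrfun.

Lemma interchange_of_assoc_comm (T : Type) (op : T -> T -> T) :
  associative op -> commutative op -> interchange op op.
Proof.
  intros Hassoc Hcomm a b c d.
  rewrite <- !Hassoc; f_equal.
  rewrite !Hassoc; f_equal; apply Hcomm.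
Qed.

Section Consistency.
Context {K : container} {BS : bcs}.

Local Notation val := (val K BS).
Local Notation chg := (chg K BS).
Local Notation oplus := (oplus K BS).
Local Notation ominus := (ominus K BS).
Local Notation incr := (incr K BS).
Local Notation iC := (iC K BS _ _).
Local Notation ii := (ii K BS _ _).
Local Notation idd := (idd K BS _ _).

Lemma oplus_ominus (A : ty K) (x y : val A) : oplus A y (ominus A x y) = x.
Proof.
  revert x y.
  induction A as [| s A IH | A IHA B IHB | A IHA B IHB]; intros x y; cbn.
  - apply boplus_ominus.
  - apply functional_extensionality; intro i; apply IH.
  - destruct x, y; cbn; rewrite IHA, IHB; reflexivity.
  - destruct x, y; cbn; rewrite ?IHA, ?IHB; reflexivity.
Qed.

Lemma castVC_castCV (A : ty K) (E : val A = chg A) (x : chg A) :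
  castVC K BS A E (castCV K BS A E x) = x.
Proof.
  unfold castVC, castCV; revert x; destruct E; reflexivity.
Qed.

Definition is_derivative (A B : ty K) (f : val A -> val B) (f' : chg A -> chg B)
  : Prop :=
  forall (x : val A) (x' : chg A), f (oplus A x x') = oplus B (f x) (f' x').

Lemma unit_incr_consistent (A B : ty K) (f : val A -> val B) (f' : chg A -> chg B) :
  is_derivative A B f f' -> consistent f (unit_incr K BS A B f f').
Proof.
  intros Hf x x'; cbn; auto.
Qed.

Lemma consistent_ii {A B : ty K} {f : val A -> val B} {I : incr A B} :
  consistent f I -> forall x : val A, ii I x = (f x, snd (ii I x)).
Proof.
  intros Hf x; destruct (Hf x (ominus A x x)) as [Hfst _].
  rewrite <- Hfst; apply surjective_pairing.
Qed.

(** The combinators below are the clauses of [trans] for compound expressions: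
    e.g. [trans (ecomp f g)] is convertible to [incr_comp (trans f) (trans g)]. *)

Definition incr_comp (A B C : ty K) (If : incr A B) (Ig : incr B C) : incr A C :=
  Incr K BS A C (iC If * iC Ig)
    (fun x => let (y, c1) := ii If x in
              let (z, c2) := ii Ig y in (z, (c1, c2)))
    (fun x' c => let (y', c1') := idd If x' (fst c) in
                 let (z', c2') := idd Ig y' (snd c) in (z', (c1', c2'))).

Lemma comp_consistent {A B C : ty K} {f : val A -> val B} {g : val B -> val C}
  {If : incr A B} {Ig : incr B C} :
  consistent f If -> consistent g Ig ->
  consistent (fun x => g (f x)) (incr_comp A B C If Ig).
Proof.
  intros Hf Hg x x'; cbn.
  destruct (Hf x x') as [Hf_i [Hf_d Hf_c]].
  destruct (ii If x) as [y c1]; cbn in *; subst y.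
  destruct (ii Ig (f x)) as [z c2] eqn:Eg; cbn.
  destruct (idd If x' c1) as [y' c1']; cbn.
  destruct (Hg (f x) y') as [Hg_i [Hg_d Hg_c]]; rewrite Eg in *; cbn in *; subst z.
  destruct (idd Ig y' c2) as [z' c2']; cbn.
  rewrite (consistent_ii Hf (oplus A x x')), Hf_c, Hf_d.
  rewrite (consistent_ii Hg (oplus B (f x) y')), Hg_c, Hg_d.
  auto.
Qed.

Definition incr_par (A B C D : ty K) (If : incr A B) (Ig : incr C D)
  : incr (tprod K A C) (tprod K B D) :=
  Incr K BS (tprod K A C) (tprod K B D) (iC If * iC Ig)
    (fun x => let (y1, c1) := ii If (fst x) in
              let (y2, c2) := ii Ig (snd x) in ((y1, y2), (c1, c2)))
    (fun x' c => let (y1', c1') := idd If (fst x') (fst c) in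
                 let (y2', c2') := idd Ig (snd x') (snd c) in
                 ((y1', y2'), (c1', c2'))).

Lemma par_consistent {A B C D : ty K} {f : val A -> val B} {g : val C -> val D}
  {If : incr A B} {Ig : incr C D} :
  consistent f If -> consistent g Ig ->
  @consistent K BS (tprod K A C) (tprod K B D)
    (fun x => (f (fst x), g (snd x))) (incr_par A B C D If Ig).
Proof.
  intros Hf Hg [x1 x2] [x1' x2']; cbn.
  destruct (Hf x1 x1') as [Hf_i [Hf_d Hf_c]].
  destruct (Hg x2 x2') as [Hg_i [Hg_d Hg_c]].
  destruct (ii If x1) as [y1 c1], (ii Ig x2) as [y2 c2]; cbn in *; subst.
  destruct (idd If x1' c1) as [y1' c1'], (idd Ig x2' c2) as [y2' c2']; cbn in *.
  rewrite (consistent_ii Hf (oplus A x1 x1')), Hf_c, Hf_d.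
  rewrite (consistent_ii Hg (oplus C x2 x2')), Hg_c, Hg_d.
  auto.
Qed.

Definition incr_map (s : shape K) (A B : ty K) (I : incr A B)
  : incr (tF K s A) (tF K s B) :=
  Incr K BS (tF K s A) (tF K s B) (pos K s -> iC I)
    (fun x => (fun j => fst (ii I (x j)), fun j => snd (ii I (x j))))
    (fun x' c => (fun j => fst (idd I (x' j) (c j)),
                  fun j => snd (idd I (x' j) (c j)))).

Lemma map_consistent (s : shape K) {A B : ty K} {f : val A -> val B}
  {I : incr A B} :
  consistent f I ->
  @consistent K BS (tF K s A) (tF K s B) (fun x j => f (x j)) (incr_map s A B I).
Proof.
  intros Hf x x'.
  split; [| split]; apply functional_extensionality; intro j;
    apply (Hf (x j) (x' j)).
Qed.

Definition incr_branch (A1 B1 A2 B2 : ty K) (If : incr A1 B1) (Ig : incr A2 B2)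
  : incr (tsum K A1 A2) (tsum K B1 B2) :=
  Incr K BS (tsum K A1 A2) (tsum K B1 B2) ((iC If * val B1) + (iC Ig * val B2))
    (fun x => match x with
              | inl x => let (y, c) := ii If x in (inl y, inl (c, y))
              | inr x => let (y, c) := ii Ig x in (inr y, inr (c, y))
              end)
    (fun x' z =>
       match x', z with
       | cl x', inl (c, y) =>
           let (y', c') := idd If x' c in (cl y', inl (c', oplus B1 y y'))
       | cr _, inl (c, y) => (snull, inl (c, y))
       | cl _, inr (c, y) => (snull, inr (c, y))
       | cr x', inr (c, y) =>
           let (y', c') := idd Ig x' c in (cr y', inr (c', oplus B2 y y'))
       | sl x, inl (_, y0) =>
           let (y, c) := ii If x in (cl (ominus B1 y y0), inl (c, y))
       | sl x, inr _ => let (y, c) := ii If x in (sl y, inl (c, y))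
       | sr x, inl _ => let (y, c) := ii Ig x in (sr y, inr (c, y))
       | sr x, inr (_, y0) =>
           let (y, c) := ii Ig x in (cr (ominus B2 y y0), inr (c, y))
       | snull, z => (snull, z)
       end).

Lemma branch_consistent {A1 B1 A2 B2 : ty K} {f : val A1 -> val B1}
  {g : val A2 -> val B2} {If : incr A1 B1} {Ig : incr A2 B2} :
  consistent f If -> consistent g Ig ->
  @consistent K BS (tsum K A1 A2) (tsum K B1 B2)
    (fun x => match x with inl y => inl (f y) | inr y => inr (g y) end)
    (incr_branch A1 B1 A2 B2 If Ig).
Proof.
  intros Hf Hg [a | a] [b | b | b | b |]; cbn.
  - destruct (Hf a b) as [_ [Hf_d Hf_c]].
    rewrite (consistent_ii Hf a), (consistent_ii Hf (oplus A1 a b)); cbn.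
    destruct (idd If b (snd (ii If a))) as [y' c']; cbn in *.
    rewrite Hf_c, Hf_d; auto.
  - rewrite (consistent_ii Hf a); auto.
  - rewrite (consistent_ii Hf a), (consistent_ii Hf b); cbn.
    rewrite oplus_ominus; auto.
  - rewrite (consistent_ii Hf a), (consistent_ii Hg b); auto.
  - rewrite (consistent_ii Hf a); auto.
  - rewrite (consistent_ii Hg a); auto.
  - destruct (Hg a b) as [_ [Hg_d Hg_c]].
    rewrite (consistent_ii Hg a), (consistent_ii Hg (oplus A2 a b)); cbn.
    destruct (idd Ig b (snd (ii Ig a))) as [y' c']; cbn in *.
    rewrite Hg_c, Hg_d; auto.
  - rewrite (consistent_ii Hg a), (consistent_ii Hf b); auto.
  - rewrite (consistent_ii Hg a), (consistent_ii Hg b); cbn.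
    rewrite oplus_ominus; auto.
  - rewrite (consistent_ii Hg a); auto.
Qed.

Lemma cst_consistent (A B : ty K) (c : val A) :
  consistent (denote (ecst K BS A B c)) (trans (ecst K BS A B c)).
Proof.
  apply unit_incr_consistent; intros x x'; symmetry; apply oplus_ominus.
Qed.

Lemma plus_consistent (A : ty K) (E : val A = chg A) :
  plus_assoc_comm K BS A E ->
  consistent (denote (eplus K BS A E)) (trans (eplus K BS A E)).
Proof.
  intros [Hassoc Hcomm].
  pose (add (u v : val A) := oplus A u (castVC K BS A E v)).
  assert (Hinterchange : interchange add add).
  { apply interchange_of_assoc_comm; [| exact Hcomm].
    intros u v w; symmetry; apply Hassoc. }
  apply unit_incr_consistent; intros [x1 x2] [x1' x2']; cbn.
  rewrite <- (castVC_castCV A E x2'); rewrite <- (castVC_castCV A E x1') at 1.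
  apply (Hinterchange x1 (castCV K BS A E x1') x2 (castCV K BS A E x2')).
Qed.

Lemma set_consistent (s : shape K) (A : ty K) (i : pos K s) :
  consistent (denote (eset K BS s A i)) (trans (eset K BS s A i)).
Proof.
  apply unit_incr_consistent; intros x x'; apply functional_extensionality; intro j.
  cbn; destruct (pos_dec K s i j); reflexivity.
Qed.

Lemma filter_consistent (s : shape K) (A : ty K) (p : pos K s -> bool) :
  consistent (denote (efilter K BS s A p)) (trans (efilter K BS s A p)).
Proof.
  apply unit_incr_consistent; intros x x'; apply functional_extensionality; intro j.
  cbn; destruct (p j); reflexivity.
Qed.

Lemma fuse_consistent (A : ty K) :
  consistent (denote (efuse K BS A)) (trans (efuse K BS A)).
Proof.
  intros [a | a] [b | b | b | b |]; cbn; rewrite ?oplus_ominus; auto.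
Qed.

Lemma distr_consistent (A B C : ty K) :
  consistent (denote (edistr K BS A B C)) (trans (edistr K BS A B C)).
Proof.
  intros [a [y | y]] [a' [b | b | b | b |]]; cbn; rewrite ?oplus_ominus; auto.
Qed.

End Consistency.

Theorem lemma5p5 (K : container) (BS : bcs) (A B : ty K)
  (e : expr K BS A B) :
  plus_ok e -> consistent (denote e) (trans e).
Proof.
  induction e; cbn [plus_ok]; intros Hok.
  (* [id], [dup], projections, [zip], [get], [reshape], [replicate], [tp],
     [inl], [inr]: the change map commutes with [oplus] by computation. *)
  all: try (apply unit_incr_consistent; intros x x'; reflexivity).
  - exact (comp_consistent (IHe1 (proj1 Hok)) (IHe2 (proj2 Hok))).
  - exact (par_consistent (IHe1 (proj1 Hok)) (IHe2 (proj2 Hok))).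
  - apply cst_consistent.
  - apply plus_consistent, Hok.
  - apply op_consistent.
  - exact (map_consistent s (IHe Hok)).
  - apply set_consistent.
  - apply filter_consistent.
  - apply fuse_consistent.
  - apply distr_consistent.
  - exact (branch_consistent (IHe1 (proj1 Hok)) (IHe2 (proj2 Hok))).
Qed.
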